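(* Let $G$ be an elementary abelian $3$-group, let $S$ be a maximal sum-free set in $G$, and let $x\in S$. Then (i) $x^{-1}S=S^{-1}S$; and (ii) $xS=S^{-1}=SS$.
   Context: A non-empty subset $S$ of a group $G$ is called sum-free if for all $s_1,s_2\in S$ (including the case $s_1=s_2$) one has $s_1s_2\notin S$. A maximal sum-free set in a finite group $G$ means a sum-free set of largest possible cardinality among all sum-free sets in $G$. Notation: $xS=\{xs: s\in S\}$, $x^{-1}S=\{x^{-1}s: s\in S\}$, $S^{-1}=\{s^{-1}: s\in S\}$, $SS=\{st: s,t\in S\}$, $S^{-1}S=\{s^{-1}t: s,t\in S\}$. *)

From mathcomp Require Import all_boot all_fingroup all_solvable.
Set Implicit Arguments. Unset Strict Implicit. Unset Printing Implicit Defensive.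
Local Open Scope group_scope.

Definition sum_free (gT : finGroupType) (G S : {set gT}) : bool :=
  [&& S \subset G, S != set0 &
      [forall s1 in S, forall s2 in S, s1 * s2 \notin S]].

Definition max_sum_free (gT : finGroupType) (G S : {set gT}) : bool :=
  sum_free G S && [forall T : {set gT}, sum_free G T ==> (#|T| <= #|S|)].

From mathcomp Require Import all_boot all_fingroup all_solvable.
Local Open Scope group_scope.

(* A coset aM of a maximal subgroup M of the 3-group G is sum-free, so a
   largest sum-free set S has #|G| <= 3 #|S|.  For y in S the sets S, yS and
   y^-1 S are pairwise disjoint (using y^-1 = y^2), hence they partition G.
   Locating w^-1 (w in S) and a^-1 b (a, b in S) in this partition gives
   yS = S^-1 and x^-1 S = S^-1 S, and then ab in aS = S^-1 gives SS = S^-1. *)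

Section SumFreeSets.

Set Implicit Arguments.
Unset Strict Implicit.

Variable gT : finGroupType.

Lemma invg_expg3 (y : gT) : y ^+ 3 = 1 -> y^-1 = y * y.
Proof. by move=> y3; apply/eqP; rewrite eq_invg_mul -y3 !expgS expg0 mulg1. Qed.

Lemma sum_free_lcoset (G M : {group gT}) a :
  M \subset G -> a \in G :\: M -> sum_free G (a *: M).
Proof.
move=> sMG /setDP[aG aM]; apply/and3P; split.
- by rewrite mul_subG ?sub1set.
- by apply/set0Pn; exists a; apply: lcoset_refl.
apply/forall_inP=> _ /lcosetP[m1 m1M ->]; apply/forall_inP=> _ /lcosetP[m2 m2M ->].
by rewrite mem_lcoset mulgA mulKg groupMl // groupMr.
Qed.

Lemma pgroup_sum_free_lcoset (p : nat) (G : {group gT}) :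
  p.-group G -> G :!=: 1 -> exists2 T : {set gT}, sum_free G T & #|G| = (p * #|T|)%N.
Proof.
move=> pG ntG; have [G1 | [M maxM _]] := maximal_exists (sub1G G).
  by rewrite -G1 eqxx in ntG.
have sMG := proper_sub (maxgroupp maxM).
have [_ [a aG aM]] := properP (maxgroupp maxM).
exists (a *: M); first by apply: sum_free_lcoset; rewrite ?inE ?aM.
by rewrite card_lcoset -(Lagrange sMG) (p_maximal_index pG maxM) mulnC.
Qed.

Section SumFree.

Variables (G : {group gT}) (S : {set gT}).
Hypothesis sfS : sum_free G S.

Lemma sum_free_sub : S \subset G.
Proof. by case/and3P: sfS. Qed.

Lemma sum_free_mul s t : s \in S -> t \in S -> s * t \notin S.
Proof. by case/and3P: sfS => _ _ /forall_inP sf sS; apply: (forall_inP (sf s sS)). Qed.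

Lemma sum_free_ntrivial : G :!=: 1.
Proof.
case/and3P: sfS => sSG /set0Pn[s sS] _; apply/trivgPn; exists s.
  exact: subsetP sSG s sS.
by apply/eqP=> s1; move: (sum_free_mul sS sS); rewrite {1}s1 mul1g sS.
Qed.

Lemma sum_free_disjoint_lcoset y : y \in S -> [disjoint S & y *: S].
Proof.
move=> yS; apply/pred0P=> z /=; rewrite mem_lcoset.
by apply/andP=> -[zS /(sum_free_mul yS)]; rewrite mulKVg zS.
Qed.

Lemma sum_free_disjoint_lcosetV y : y \in S -> [disjoint S & y^-1 *: S].
Proof.
move=> yS; apply/pred0P=> z /=; rewrite mem_lcoset invgK.
by apply/andP=> -[zS]; apply/negP/sum_free_mul.
Qed.

Lemma sum_free_disjoint_lcosets y :
  y \in S -> y ^+ 3 = 1 -> [disjoint y *: S & y^-1 *: S].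
Proof.
move=> yS y3; apply/pred0P=> z /=; rewrite !mem_lcoset invgK.
by apply/andP=> -[zS /(sum_free_mul yS)]; rewrite mulgA -invg_expg3 ?zS.
Qed.

Lemma sum_free_lcosets_cover y :
  y \in S -> y ^+ 3 = 1 -> #|G| <= 3 * #|S| ->
  S :|: y *: S :|: y^-1 *: S = G.
Proof.
move=> yS y3 leG3S; have yG := subsetP sum_free_sub y yS.
have sUG : S :|: y *: S :|: y^-1 *: S \subset G.
  by rewrite !subUset sum_free_sub !mul_subG ?sub1set ?groupV ?sum_free_sub.
have disUV : [disjoint S :|: y *: S & y^-1 *: S].
  rewrite -setI_eq0 setIUl !disjoint_setI0 ?setU0 //.
    exact: sum_free_disjoint_lcosets.
  exact: sum_free_disjoint_lcosetV.
apply/eqP; rewrite eqEcard sUG (eqTleqif (leq_card_setU _ _) disUV).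
rewrite (eqTleqif (leq_card_setU _ _) (sum_free_disjoint_lcoset yS)).
by rewrite !card_lcoset -addnA addnn -mul2n -mulSn.
Qed.

End SumFree.

Lemma max_sum_free_card (G : {group gT}) (S : {set gT}) :
  3.-group G -> max_sum_free G S -> #|G| <= 3 * #|S|.
Proof.
move=> pG /andP[sfS /forall_inP maxS].
have [T sfT ->] := pgroup_sum_free_lcoset pG (sum_free_ntrivial sfS).
by rewrite leq_mul2l maxS.
Qed.

Section MaxSumFreeExponent3.

Variables (G : {group gT}) (S : {set gT}).
Hypotheses (expG3 : exponent G %| 3) (maxS : max_sum_free G S).

Let sfS : sum_free G S. Proof. by case/andP: maxS. Qed.

Let inG w : w \in S -> w \in G. Proof. exact: subsetP (sum_free_sub sfS) w. Qed.

Let expg3 w : w \in S -> w ^+ 3 = 1.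
Proof. by move/inG; apply: (exponentP expG3). Qed.

Lemma max_sum_free_cover y z :
  y \in S -> z \in G -> [|| z \in S, z \in y *: S | z \in y^-1 *: S].
Proof.
move=> yS; rewrite -{1}(sum_free_lcosets_cover sfS yS) ?expg3 ?inE ?orbA //.
by apply: max_sum_free_card; rewrite // -pnat_exponent (pnat_dvd expG3).
Qed.

Lemma max_sum_free_lcoset y : y \in S -> y *: S = S^-1.
Proof.
move=> yS; apply/eqP; rewrite eq_sym eqEcard card_invg card_lcoset leqnn andbT.
apply/subsetP=> w; rewrite mem_invg => wS.
have wG : w \in G by rewrite -(invgK w) groupV inG.
have /or3P[wS' | // | ywS] := max_sum_free_cover yS wG.
  by move: (sum_free_mul sfS wS wS); rewrite -invg_expg3 ?expg3 // invgK wS'.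
rewrite mem_lcoset invgK in ywS.
by move: (sum_free_mul sfS ywS wS); rewrite mulgK yS.
Qed.

Lemma max_sum_free_lcosetV x : x \in S -> x^-1 *: S = S^-1 * S.
Proof.
move=> xS; apply/eqP; rewrite eqEsubset mulSg ?sub1set ?mem_invg ?invgK //=.
apply/subsetP=> _ /mulsgP[a b aSV bS ->]; rewrite mem_invg in aSV.
have aG : a \in G by rewrite -(invgK a) groupV inG.
have /or3P[abS | abSV | //] := max_sum_free_cover xS (groupM aG (inG bS)).
  by move: (sum_free_mul sfS aSV abS); rewrite mulKg bS.
rewrite (max_sum_free_lcoset xS) mem_invg in abSV.
by move: (sum_free_mul sfS bS abSV); rewrite invMg mulKVg aSV.
Qed.

Lemma max_sum_free_invg : S^-1 = S * S.
Proof.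
apply/eqP; rewrite eqEsubset; apply/andP; split; apply/subsetP=> w.
  by rewrite mem_invg => wS; rewrite -(invgK w) invg_expg3 ?expg3 ?mem_mulg.
by case/mulsgP=> a b aS bS ->; rewrite -(max_sum_free_lcoset aS) mem_mulg ?set11.
Qed.

End MaxSumFreeExponent3.

End SumFreeSets.

Theorem proposition1 (gT : finGroupType) (G : {group gT}) (S : {set gT}) (x : gT) :
  3.-abelem G -> max_sum_free G S -> x \in S ->
  (x^-1 *: S = S^-1 * S) /\ (x *: S = S^-1 /\ S^-1 = S * S).
Proof.
rewrite abelemE // => /andP[_ expG3] maxS xS.
split; first by apply: (max_sum_free_lcosetV expG3 maxS xS).
by rewrite (max_sum_free_lcoset expG3 maxS xS) (max_sum_free_invg expG3 maxS).
Qed.
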